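(* For every $v\in\big[-B^{1/(1+\epsilon)},\,B^{1/(1+\epsilon)}(1-\pi)^{-1/(1+\epsilon)}\big)$, the set $\hat S(v)$ is compact.
   Context: $\pi\in(0,1)$, $\epsilon>0$, $B>0$. For $\lambda\in\mathbb{R}^3$ and $X\in\mathbb{R}$: $g^U(X,\lambda,v)=1+\lambda_1v-\lambda_2(1-\pi)+\lambda_3(|X|^{1+\epsilon}-B)-\big(\frac{\lambda_1X}{1-\pi}-\lambda_2\big)_+$. $\hat S(v)=\{\lambda\in\mathbb{R}^3:\lambda_1\ge0,\lambda_2\in\mathbb{R},\lambda_3\ge0,\ g^U(x,\lambda,v)\ge0\ \forall x\in\mathbb{R}\}$. *)

From HB Require Import structures.
From mathcomp Require Import all_boot all_order all_algebra.
From mathcomp Require Import all_classical all_reals all_analysis.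
Set Implicit Arguments. Unset Strict Implicit. Unset Printing Implicit Defensive.
Import Order.TTheory GRing.Theory Num.Theory.
Local Open Scope ring_scope.
Import numFieldNormedType.Exports.
Local Open Scope classical_set_scope.

(* lambda = ((l1, l2), l3) *)
Definition gU {R : realType} (pi eps B : R) (X : R) (l : R * R * R) (v : R) : R :=
  1 + l.1.1 * v - l.1.2 * (1 - pi) + l.2 * (powR `|X| (1 + eps) - B)
  - Num.max (l.1.1 * X / (1 - pi) - l.1.2) 0.

Definition Shat {R : realType} (pi eps B v : R) : set (R * R * R) :=
  [set l | 0 <= l.1.1 /\ 0 <= l.2 /\ forall x : R, 0 <= gU pi eps B x l v].

From HB Require Import structures.
From mathcomp Require Import all_boot all_order all_algebra.
From mathcomp Require Import all_classical all_reals all_analysis.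
From mathcomp Require Import lra.
Import Order.TTheory GRing.Theory Num.Theory.
Local Open Scope ring_scope.
Import numFieldNormedType.Exports.
Local Open Scope classical_set_scope.

(* S(v) is closed, being cut out by the constraints g^U(x, ., v) >= 0, each continuous in lambda.
   It is bounded: the constraint at x = 0 bounds (1 - pi) l2 + B l3 and - pi l2 + B l3 by
   1 + l1 v, and at the point w with |w|^(1+eps) = B / (1 - pi) the constraint, combined with
   pi times the one at 0, gives l1 (w - v) <= 1.  As v < w, this bounds l1, hence l2 and l3. *)

Lemma continuous_closed_ge0 (T : topologicalType) (R : realType) (f : T -> R) :
  continuous f -> closed [set t | 0 <= f t].
Proof. by move=> /continuous_closedP fc; exact: (fc _ (@closed_ge R 0)). Qed.

Lemma powR_root_div (R : realType) (a b p : R) : 0 <= a -> 0 <= b -> p != 0 ->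
  powR (powR a p^-1 * powR b (- p^-1)) p = a / b.
Proof.
move=> a_ge0 b_ge0 p_neq0.
by rewrite powRM ?powR_ge0 // -!powRrM mulVf // mulNr mulVf // powRN !powRr1.
Qed.

Section Shat.
Context {R : realType} { pi eps B v : R }.

Lemma continuous_gU (x : R) : continuous (fun l : R * R * R => gU pi eps B x l v).
Proof.
have fst1 : continuous (fun l : R * R * R => l.1.1).
  by move=> l; exact: (cvg_comp _ _ cvg_fst cvg_fst).
have fst2 : continuous (fun l : R * R * R => l.1.2).
  by move=> l; exact: (cvg_comp _ _ cvg_fst cvg_snd).
have hinner : continuous (fun l : R * R * R => l.1.1 * x / (1 - pi) - l.1.2).
  move=> l; apply: cvgB; last exact: fst2.
  by apply: cvgM; [apply: cvgM; [exact: fst1|exact: cvg_cst]|exact: cvg_cst].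
have hmax := max_fun_continuous hinner (@cst_continuous _ _ 0).
move=> l; apply: cvgB; last exact: hmax.
apply: cvgD; [apply: cvgB; [apply: cvgD|]|]; try apply: cvgM; try exact: cvg_cst.
- exact: fst1.
- exact: fst2.
- exact: cvg_snd.
Qed.

Lemma closed_Shat : closed (Shat pi eps B v).
Proof.
have -> : Shat pi eps B v = [set l | 0 <= l.1.1] `&` [set l | 0 <= l.2]
    `&` \bigcap_(x in [set: R]) [set l | 0 <= gU pi eps B x l v].
  apply/seteqP; split => [l [l1 [l3 g]]|l [[l1 l3] g]].
    by split; [split|move=> x _; exact: g].
  by split; [|split=> // x; exact: g].
apply: closedI; first apply: closedI.
- by apply: continuous_closed_ge0 => l; exact: (cvg_comp _ _ cvg_fst cvg_fst).
- by apply: continuous_closed_ge0 => l; exact: cvg_snd.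
- by apply: closed_bigI => x _; apply: continuous_closed_ge0; exact: continuous_gU.
Qed.

Hypotheses (pi_gt0 : 0 < pi) (pi_lt1 : pi < 1) (B_gt0 : 0 < B) (eps1_neq0 : 1 + eps != 0).

Lemma gU0 (l : R * R * R) :
  gU pi eps B 0 l v = 1 + l.1.1 * v - l.1.2 * (1 - pi) - l.2 * B - Num.max (- l.1.2) 0.
Proof. by rewrite /gU normr0 powR0 // !mulr0 mul0r sub0r add0r mulrN. Qed.

Lemma Shat_lambda2_le {l : R * R * R} :
  Shat pi eps B v l -> l.1.2 * (1 - pi) + l.2 * B <= 1 + l.1.1 * v.
Proof.
move=> [_ [_ /(_ 0)]]; rewrite gU0.
have : 0 <= Num.max (- l.1.2) 0 by rewrite le_max lexx orbT.
lra.
Qed.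

Lemma Shat_lambda2_ge {l : R * R * R} :
  Shat pi eps B v l -> - (l.1.2 * pi) + l.2 * B <= 1 + l.1.1 * v.
Proof.
move=> [_ [_ /(_ 0)]]; rewrite gU0.
have : - l.1.2 <= Num.max (- l.1.2) 0 by rewrite le_max lexx.
lra.
Qed.

Lemma Shat_lambda1_le {w : R} {l : R * R * R} :
  powR `|w| (1 + eps) = B / (1 - pi) -> Shat pi eps B v l -> l.1.1 * (w - v) <= 1.
Proof.
move=> hw Sl; case: (Sl) => _ [_ /(_ w)]; rewrite /gU hw.
have := Shat_lambda2_le Sl.
have : l.1.1 * w / (1 - pi) - l.1.2 <= Num.max (l.1.1 * w / (1 - pi) - l.1.2) 0.
  by rewrite le_max lexx.
set a := l.1.1 * w / (1 - pi); set b := B / (1 - pi); set S := 1 + l.1.1 * v.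
have ea : l.1.1 * w = a * (1 - pi) by rewrite /a mulfVK // subr_eq0 gt_eqF.
have eb : B = b * (1 - pi) by rewrite /b mulfVK // subr_eq0 gt_eqF.
rewrite (mulrBr l.1.1 w v) ea eb => hmax h0 hw'.
have ha : a <= S + pi * (l.1.2 + l.2 * b) by lra.
(* (1 - pi) * ha + pi * h0 cancels l2 and l3. *)
have q_ge0 : 0 <= 1 - pi by rewrite subr_ge0 ltW.
have := ler_wpM2l q_ge0 ha.
have := ler_wpM2l (ltW pi_gt0) h0.
rewrite /S; lra.
Qed.

Lemma Shat_bounded {w : R} : v < w -> powR `|w| (1 + eps) = B / (1 - pi) ->
  exists r : R, Shat pi eps B v `<=` `[- r, r] `*` `[- r, r] `*` `[- r, r].
Proof.
move=> vw hw; set K := (w - v)^-1; set S := 1 + K * `|v|.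
have K_gt0 : 0 < K by rewrite invr_gt0 subr_gt0.
have S_ge1 : 1 <= S by rewrite lerDl mulr_ge0 // ltW.
have q_gt0 : 0 < 1 - pi by rewrite subr_gt0.
exists (K + S / B + S / (1 - pi) + S / pi) => l Sl.
have [l1_ge0 [l3_ge0 _]] := Sl.
have l1_le : l.1.1 <= K.
  by rewrite -[K]mulr1 ler_pdivlMl ?subr_gt0 // mulrC (Shat_lambda1_le hw Sl).
have l1v_le : l.1.1 * v <= K * `|v|.
  apply: le_trans (ler_wpM2r (normr_ge0 v) l1_le).
  by rewrite ler_wpM2l // ler_norm.
have h2le := Shat_lambda2_le Sl; have h2ge := Shat_lambda2_ge Sl.
have l3B_le : l.2 * B <= S.
  have := ler_wpM2l (ltW pi_gt0) h2le; have := ler_wpM2l (ltW q_gt0) h2ge.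
  rewrite /S; lra.
have l3_le : l.2 <= S / B by rewrite ler_pdivlMr.
have l2_le : l.1.2 <= S / (1 - pi).
  by rewrite ler_pdivlMr //; have := mulr_ge0 l3_ge0 (ltW B_gt0); rewrite /S; lra.
have l2_ge : - (S / pi) <= l.1.2.
  by rewrite lerNl ler_pdivlMr // mulNr; have := mulr_ge0 l3_ge0 (ltW B_gt0); rewrite /S; lra.
have S_ge0 : 0 <= S by lra.
have := divr_ge0 S_ge0 (ltW B_gt0); have := divr_ge0 S_ge0 (ltW q_gt0).
have := divr_ge0 S_ge0 (ltW pi_gt0).
by split; [split|]; rewrite /= in_itv /=; apply/andP; split; lra.
Qed.
End Shat.

Theorem lemma17 (R : realType) (pi eps B : R)
  (hpi0 : 0 < pi) (hpi1 : pi < 1) (heps : 0 < eps) (hB : 0 < B) (v : R)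
  (hv1 : - powR B (1 + eps)^-1 <= v)
  (hv2 : v < powR B (1 + eps)^-1 * powR (1 - pi) (- (1 + eps)^-1)) :
  compact (Shat pi eps B v : set (R * R * R)).
Proof.
set w := powR B (1 + eps)^-1 * powR (1 - pi) (- (1 + eps)^-1) in hv2.
have eps1_neq0 : 1 + eps != 0 by rewrite gt_eqF // ltr_wpDr // ltW.
have q_ge0 : 0 <= 1 - pi by rewrite subr_ge0 ltW.
have hw : powR `|w| (1 + eps) = B / (1 - pi).
  by rewrite ger0_norm ?mulr_ge0 ?powR_ge0 // powR_root_div // ltW.
have [r Sr] := Shat_bounded hpi0 hpi1 hB eps1_neq0 hv2 hw.
apply: subclosed_compact closed_Shat _ Sr.
by apply: compact_setX; [apply: compact_setX|]; exact: segment_compact.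
Qed.
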